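(* If a $\sigma$-structure $\mathcal{A}$ has a $\mathfrak{g}$-guarded decomposition $\tau$, then $|A| \geq |\mathsf{MaxGuarded}(\mathcal{A})|$, where $\mathsf{MaxGuarded}(\mathcal{A})$ is the set of maximal $\mathfrak{g}$-guarded subsets of $A$.
   Context: $\mathfrak{g}$ is atom, loose or clique guarding; plays are non-empty lists of $\mathfrak{g}$-guarded sets, ordered by prefix $\sqsubseteq$, with $\lambda(p)$ the last element; $[p,a]$ denotes the class of the focussed play $\langle p,a\rangle$ ($a\in\lambda(p)$) under $\langle p,a\rangle\sim\langle q,a'\rangle$ iff $a=a'$, $p\sqcap q$ non-empty, and $a\in\lambda(u)$ for all $u$ on the prefix-order paths from $p\sqcap q$ to $p$ and $q$. A $\mathfrak{g}$-guarded decomposition is a map $\tau$ from $A$ to plays, with image $P_\tau$, that is reflexive ($a\in\lambda(\tau(a))$), edge covering (Gaifman-adjacent elements lie together in some $\lambda(p)$, $p\in P_\tau$), minimal ($[\tau(a),a]=[q,a]$ implies $\tau(a)\sqsubseteq q$) and vertex connected (for $q$ below some element of $P_\tau$ with $a\in\lambda(q)$, $[\tau(a),a]=[q,a]$). *)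

From mathcomp Require Import all_boot.
From mathcomp Require Import boolp.
Set Implicit Arguments. Unset Strict Implicit. Unset Printing Implicit Defensive.

(* A sigma-structure: relation symbols [sym] with arities [ar], a finite
   domain [A], and an interpretation [I R] of each symbol as a predicate on
   (ar R)-tuples of A. *)

Inductive guarding := AtomG | LooseG | CliqueG.

Section Guarded.
Variables (sym : Type) (ar : sym -> nat) (A : finType).
Variable I : forall R : sym, (ar R).-tuple A -> Prop.

Definition gaifman_adj (a b : A) : Prop :=
  a != b /\ exists (R : sym) (t : (ar R).-tuple A), I t /\ a \in tval t /\ b \in tval t.

Definition atom_guarded (X : {set A}) : Prop :=
  X != set0 /\
  ((exists a, X = [set a]) \/
   exists (R : sym) (t : (ar R).-tuple A), I t /\ X = [set x in tval t]).

Definition loose_guarded (X : {set A}) : Prop :=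
  X != set0 /\
  forall a b, a \in X -> b \in X -> exists Y, atom_guarded Y /\ a \in Y /\ b \in Y.

Definition clique_guarded (X : {set A}) : Prop :=
  X != set0 /\ forall a b, a \in X -> b \in X -> a != b -> gaifman_adj a b.

Definition guarded (g : guarding) (X : {set A}) : Prop :=
  match g with
  | AtomG => atom_guarded X
  | LooseG => loose_guarded X
  | CliqueG => clique_guarded X
  end.

Definition max_guarded (g : guarding) (X : {set A}) : Prop :=
  guarded g X /\ forall Y, guarded g Y -> X \subset Y -> X = Y.

Definition MaxGuarded (g : guarding) : {set {set A}} :=
  [set X | `[< max_guarded g X >]].

Definition play (g : guarding) (p : seq {set A}) : Prop :=
  p != [::] /\ forall X, X \in p -> guarded g X.

Definition lam (p : seq {set A}) : {set A} := last set0 p.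

Fixpoint meet (p q : seq {set A}) : seq {set A} :=
  match p, q with
  | x :: p', y :: q' => if x == y then x :: meet p' q' else [::]
  | _, _ => [::]
  end.

Definition fsim (p : seq {set A}) (a : A) (q : seq {set A}) (a' : A) : Prop :=
  a = a' /\ meet p q != [::] /\
  forall u, prefix (meet p q) u -> (prefix u p \/ prefix u q) -> a \in lam u.

(* [p,a] = [q,a'] (equality of ~-classes, ~ being an equivalence) *)
Definition same_class p a q a' : Prop := fsim p a q a'.

Definition guarded_decomposition (g : guarding) (tau : A -> seq {set A}) : Prop :=
  (forall a, play g (tau a)) /\
  (forall a, a \in lam (tau a)) /\
  (forall a b, gaifman_adj a b -> exists c, a \in lam (tau c) /\ b \in lam (tau c)) /\
  (forall a q, play g q -> a \in lam q -> same_class (tau a) a q a -> prefix (tau a) q) /\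
  (forall a q, play g q -> (exists c, prefix q (tau c)) -> a \in lam q ->
     same_class (tau a) a q a).

End Guarded.

(* Every guarded set is a clique of the Gaifman graph.  Given a maximal
   guarded set X, pick b in X whose play tau b is longest.  For any other b'
   in X, edge covering yields a play tau c whose bag contains b and b'; vertex
   connectivity and minimality make tau b and tau b' prefixes of tau c, so
   tau b' is a prefix of tau b, which lies on the path from tau b' to tau c
   along which b' stays in the bags.  Hence X is contained in lambda(tau b),
   and maximality gives X = lambda(tau b): the map a |-> lambda(tau a) covers
   MaxGuarded. *)

From mathcomp Require Import all_boot.
From mathcomp Require Import boolp.
Set Implicit Arguments. Unset Strict Implicit. Unset Printing Implicit Defensive.

Lemma leq_size_prefix (T : eqType) (p q r : seq T) :
  size p <= size q -> prefix p r -> prefix q r -> prefix p q.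
Proof.
rewrite !prefixE => le_pq /eqP take_p /eqP take_q.
by rewrite -take_q take_takel // take_p.
Qed.

Section Guarded.
Variables (sym : Type) (ar : sym -> nat) (A : finType).
Variable I : forall R : sym, (ar R).-tuple A -> Prop.

Lemma meet_prefix (p q : seq {set A}) : prefix p q -> meet p q = p.
Proof.
elim: p q => [|x p IHp] [|y q] //=.
rewrite /prefix /= -/(prefix p q).
by case: eqP => [-> /IHp ->|].
Qed.

Lemma atom_guarded_adj (Y : {set A}) a b :
  atom_guarded I Y -> a \in Y -> b \in Y -> a != b -> gaifman_adj I a b.
Proof.
move=> [_ [[c ->]|[R [t [It ->]]]]].
  by rewrite !in_set1 => /eqP -> /eqP ->; rewrite eqxx.
by rewrite !inE => Ya Yb neq_ab; split=> //; exists R, t.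
Qed.

Lemma guarded_clique g (X : {set A}) : guarded I g X ->
  forall a b, a \in X -> b \in X -> a != b -> gaifman_adj I a b.
Proof.
case: g => /= [atom_X a b|[_ loose_X] a b Xa Xb|[] //]; first exact: atom_guarded_adj.
have [Y [atom_Y [Ya Yb]]] := loose_X a b Xa Xb; exact: atom_guarded_adj atom_Y Ya Yb.
Qed.

Lemma guarded_neq0 g (X : {set A}) : guarded I g X -> X != set0.
Proof. by case: g => -[]. Qed.

Variables (g : guarding) (tau : A -> seq {set A}).
Hypothesis decomp : guarded_decomposition I g tau.

Lemma lam_tau_guarded a : guarded I g (lam (tau a)).
Proof.
have [tau_ne tau_guarded] := decomp.1 a.
apply: tau_guarded; rewrite /lam.
by case: (tau a) tau_ne => [|X p] //= _; apply: mem_last.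
Qed.

Lemma tau_same_class b c : b \in lam (tau c) -> same_class (tau b) b (tau c) b.
Proof.
have [play_tau [_ [_ [_ connected]]]] := decomp.
by move=> b_c; apply: connected => //; exists c; apply: prefix_refl.
Qed.

Lemma tau_prefix b c : b \in lam (tau c) -> prefix (tau b) (tau c).
Proof.
have [play_tau [_ [_ [minimal _]]]] := decomp.
by move=> b_c; apply: minimal => //; apply: tau_same_class.
Qed.

Lemma mem_lam_tau_size b b' c :
  b \in lam (tau c) -> b' \in lam (tau c) -> size (tau b') <= size (tau b) ->
  b' \in lam (tau b).
Proof.
move=> b_c b'_c le_b'b.
have [_ [_ on_path]] := tau_same_class b'_c.
have pre_b'c := tau_prefix b'_c; have pre_bc := tau_prefix b_c.
have pre_b'b := leq_size_prefix le_b'b pre_b'c pre_bc.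
by apply: on_path; [rewrite meet_prefix | right].
Qed.

Lemma guarded_sub_lam_tau (X : {set A}) :
  guarded I g X -> exists b, X \subset lam (tau b).
Proof.
have [_ [reflexive [covering _]]] := decomp.
move=> guarded_X; have [a0 Xa0] := set0Pn X (guarded_neq0 guarded_X).
have [b Xb longest] := @arg_maxnP A a0 (mem X) (fun x => size (tau x)) Xa0.
exists b; apply/subsetP => b' Xb'.
have [-> | neq_b'b] := eqVneq b' b; first exact: reflexive.
have [c [b'_c b_c]] := covering _ _ (guarded_clique guarded_X Xb' Xb neq_b'b).
exact: mem_lam_tau_size b_c b'_c (longest b' Xb').
Qed.

Lemma MaxGuarded_sub_lam_tau : MaxGuarded I g \subset [set lam (tau a) | a in A].
Proof.
apply/subsetP => X; rewrite inE => /asboolP [guarded_X maximal_X].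
have [b sub_X] := guarded_sub_lam_tau guarded_X.
by rewrite (maximal_X _ (lam_tau_guarded b) sub_X) imset_f.
Qed.

End Guarded.

Theorem proposition4p5 (sym : Type) (ar : sym -> nat) (A : finType)
  (I : forall R : sym, (ar R).-tuple A -> Prop) (g : guarding)
  (tau : A -> seq {set A}) :
  guarded_decomposition I g tau -> #|MaxGuarded I g| <= #|A|.
Proof.
move=> decomp; apply: leq_trans (leq_imset_card (fun a => lam (tau a)) A).
exact/subset_leq_card/MaxGuarded_sub_lam_tau.
Qed.
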